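(* Let $G$ be a graph on $[n]$ and let $e$ and $f$ be two crossing edges of $G$ that are crossing closed. Then exactly one of the following holds. (1) There is an edge of $G$ joining a vertex of $e$ to a vertex of $f$. In this case $J(e,f)=G[e\cup f]$, the induced subgraph on the four endpoints of $e$ and $f$ (so $J(e,f)$ is a subgraph of $K_4$). (2) There is no edge of $G$ joining a vertex of $e$ to a vertex of $f$. In this case, writing $e=vv'$ and $f=ww'$ suitably, there are $k\ge 0$ and distinct vertices $x_0,\dots,x_k$ not on $e$ or $f$ such that $J(e,f)$ has vertex set $\{v,v',x_0,\dots,x_k,w',w\}$ and its edges are exactly $vv'$, $ww'$, the path edges $x_0x_1,x_1x_2,\dots,x_{k-1}x_k$, at least one and at most two of the edges $vx_0,v'x_0$, and at least one and at most two of the edges $wx_k,w'x_k$ (with no other edges). Moreover, every vertex of $J(e,f)$ not on $e$ or $f$ (i.e. each $x_i$) is a cut vertex of $G$ that separates $e$ and $f$.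
   Context: All graphs are finite simple graphs with vertex set $[n]=\{1,\dots,n\}$; edges are written $ij$ with $i<j$. Two edges $a_1a_2$ and $b_1b_2$ cross if $a_1<b_1<a_2<b_2$ or $b_1<a_1<b_2<a_2$. For a set $S$ of vertices, $G[S]$ is the induced subgraph of $G$ on $S$; for a set of edges $E$, $G[E]$ is the induced subgraph on the set of endpoints of the edges in $E$. Two crossing edges $e,f$ of $G$ are crossing closed if among all induced connected subgraphs of $G$ containing both $e$ and $f$ there is a unique one that is minimal with respect to containment; this subgraph is denoted $J(e,f)$. A vertex $x$ separates $e$ and $f$ if $e$ and $f$ lie in different connected components of $G\setminus x$. *)

(* Graphs on [n] are modelled on the vertex type 'I_n
   (i.e. {0,...,n-1}, order-isomorphic to {1,...,n}) by a symmetric,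
   irreflexive adjacency relation adj : rel 'I_n. *)
From mathcomp Require Import all_boot.
Set Implicit Arguments. Unset Strict Implicit. Unset Printing Implicit Defensive.

Section Graphs.
Variable n : nat.
Variable adj : rel 'I_n.

Definition is_edge (i j : 'I_n) : bool := (i < j) && adj i j.

(* edges a1a2 and b1b2 (a1<a2, b1<b2) cross *)
Definition cross (a1 a2 b1 b2 : 'I_n) : Prop :=
  ((a1 < b1) && (b1 < a2) && (a2 < b2)) \/ ((b1 < a1) && (a1 < b2) && (b2 < a2)).

Definition induced (S : {set 'I_n}) : rel 'I_n :=
  [rel x y | [&& x \in S, y \in S & adj x y]].

Definition connected_on (S : {set 'I_n}) : bool :=
  [forall x in S, forall y in S, connect (induced S) x y].

Definition spans_conn (a1 a2 b1 b2 : 'I_n) (S : {set 'I_n}) : bool :=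
  ([set a1; a2; b1; b2] \subset S) && connected_on S.

(* S is the vertex set of J(e,f): the unique minimal induced connected
   subgraph containing e and f (induced subgraphs are ordered by
   containment exactly as their vertex sets). *)
Definition is_J (a1 a2 b1 b2 : 'I_n) (S : {set 'I_n}) : Prop :=
  forall S', minset (spans_conn a1 a2 b1 b2) S' = (S' == S).

Definition crossing_closed (a1 a2 b1 b2 : 'I_n) : Prop :=
  exists S, is_J a1 a2 b1 b2 S.

Definition joined (a1 a2 b1 b2 : 'I_n) : bool :=
  [|| adj a1 b1, adj a1 b2, adj a2 b1 | adj a2 b2].

Definition del_vertex (x : 'I_n) : rel 'I_n := induced [set~ x].

Definition separates (x a1 a2 b1 b2 : 'I_n) : Prop :=
  x \notin [set a1; a2; b1; b2] /\
  forall p q, p \in [set a1; a2] -> q \in [set b1; b2] ->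
    ~~ connect (del_vertex x) p q.

Definition cut_vertex (x : 'I_n) : Prop :=
  exists p q, [/\ p != x, q != x, connect adj p q & ~~ connect (del_vertex x) p q].

End Graphs.

Definition upair (n : nat) (a b c d : 'I_n) : bool :=
  ((a == c) && (b == d)) || ((a == d) && (b == c)).

From mathcomp Require Import all_boot zify.
From Stdlib Require Import Classical Wf_nat.
Set Implicit Arguments. Unset Strict Implicit. Unset Printing Implicit Defensive.

(* If an edge of G joins e to f, then e and f already span a connected induced
   subgraph, which by minimality is J(e,f).  Otherwise take a shortest walk
   x_0 ... x_m inside J(e,f) from an end of e to an end of f; since e and f are
   disjoint and not joined, m >= 2.  The walk together with e and f spans a
   connected induced subgraph of J(e,f), hence all of it.  Shortness means that
   any shortcut would give a shorter walk: the walk is an induced path, it meets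
   e only in x_0 and f only in x_m, and the other end of e (resp. f) can only be
   adjacent to x_0, x_1 (resp. x_(m-1), x_m); this determines the edge set.
   Finally, if an inner vertex z did not separate e from f, the component of
   G \ z containing e and f would be a connected spanning set avoiding z, so by
   minimality it would contain J(e,f), which contains z. *)

Lemma ex_minimal_nat (P : nat -> Prop) :
  (exists m, P m) -> exists2 m, P m & forall l, P l -> m <= l.
Proof.
move=> exP.
have [m [[Pm m_min] _]] :=
  dec_inh_nat_subset_has_unique_least_element P (fun l => classic (P l)) exP.
by exists m => // l /m_min/leP.
Qed.

Section Walks.
Variables (T : Type) (r : rel T).

Definition walk (x : nat -> T) (m : nat) := forall i, i < m -> r (x i) (x i.+1).

Lemma walk0 x : walk x 0.
Proof. by []. Qed.

Lemma walk_prefix x m i : walk x m -> i <= m -> walk x i.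
Proof. by move=> xw im t ti; apply: xw; apply: leq_trans im. Qed.

Lemma walk_shift j x m : walk x m -> walk (fun t => x (t + j)) (m - j).
Proof. by move=> xw t tlt; rewrite addSn; apply: xw; lia. Qed.

Definition glue (x y : nat -> T) i t := if t <= i then x t else y (t - i.+1).

Lemma glue_head x y i t : t <= i -> glue x y i t = x t.
Proof. by rewrite /glue => ->. Qed.

Lemma glue_tail x y i t : glue x y i (i.+1 + t) = y t.
Proof. by rewrite /glue ifN; [rewrite addKn | lia]. Qed.

Lemma walk_glue x y i l :
  walk x i -> r (x i) (y 0) -> walk y l -> walk (glue x y i) (i + l).+1.
Proof.
move=> xw xy yw t tlt; case: (ltngtP t i) => [ti|it|->].
- by rewrite !glue_head ?xw // ltnW.
- have [s ts] : exists s, t = i.+1 + s by exists (t - i.+1); lia.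
  by subst t; rewrite -addnS !glue_tail yw //; lia.
- by rewrite glue_head // -[i.+1]addn0 glue_tail.
Qed.

End Walks.

Lemma walk_connect (T : finType) (r : rel T) x m i :
  walk r x m -> i <= m -> connect r (x 0) (x i).
Proof.
move=> xw; elim: i => [|i IHi] im; first exact: connect0.
exact: connect_trans (IHi (ltnW im)) (connect1 (xw _ im)).
Qed.

Lemma connect_walk (T : finType) (r : rel T) a b :
  connect r a b -> exists x m, [/\ x 0 = a, x m = b & walk r x m].
Proof.
case/connectP=> s rs ->; exists (nth a (a :: s)), (size s).
by split=> // [|i]; [rewrite -[size s]/(size (a :: s)).-1 nth_last | apply/pathP].
Qed.

Section ShortestWalk.
Variables (T : Type) (r : rel T) (P Q : {pred T}).

Definition shortest_walk x m := [/\ x 0 \in P, x m \in Q, walk r x m &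
  forall y l, y 0 \in P -> y l \in Q -> walk r y l -> m <= l].

Lemma shortest_walk_exists :
  (exists x m, [/\ x 0 \in P, x m \in Q & walk r x m]) -> exists x m, shortest_walk x m.
Proof.
move=> [x0 [m0 w0]].
have [m [x [x0P xmQ xw]] m_min] := @ex_minimal_nat
  (fun m => exists x, [/\ x 0 \in P, x m \in Q & walk r x m]) (ex_intro _ m0 (ex_intro _ x0 w0)).
by exists x, m; split=> // y l y0P ylQ yw; apply: m_min; exists y.
Qed.

Variables (x : nat -> T) (m : nat).
Hypothesis xs : shortest_walk x m.
Let x0P : x 0 \in P. Proof. by case: xs. Qed.
Let xmQ : x m \in Q. Proof. by case: xs. Qed.
Let xw : walk r x m. Proof. by case: xs. Qed.
Let x_shortest : forall y l, y 0 \in P -> y l \in Q -> walk r y l -> m <= l.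
Proof. by case: xs. Qed.

Let shortest_glue y z i l : walk r y i -> r (y i) (z 0) -> walk r z l ->
  y 0 \in P -> z l \in Q -> m <= (i + l).+1.
Proof.
move=> yw yz zw y0P zlQ; apply: x_shortest (walk_glue yw yz zw).
  by rewrite glue_head.
by rewrite -addSn glue_tail.
Qed.

Lemma shortest_walk_notin_Q i : i < m -> x i \notin Q.
Proof.
move=> im; apply/negP=> xiQ.
by have := x_shortest x0P xiQ (walk_prefix xw (ltnW im)); lia.
Qed.

Lemma shortest_walk_notin_P i : 0 < i <= m -> x i \notin P.
Proof.
move=> /andP[i0 im]; apply/negP=> xiP.
by have := x_shortest xiP _ (walk_shift (j := i) xw); rewrite subnK // => /(_ xmQ); lia.
Qed.

Lemma shortest_walk_chordless i j : i < j <= m -> r (x i) (x j) -> j = i.+1.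
Proof.
move=> /andP[ij jm] xij; have xw_i := walk_prefix xw (ltnW (leq_trans ij jm)).
have := shortest_glue xw_i xij (walk_shift (j := j) xw) x0P.
by rewrite subnK // => /(_ xmQ); lia.
Qed.

Lemma shortest_walk_P_adj a j : a \in P -> r a (x j) -> j <= m -> j <= 1.
Proof.
move=> aP axj jm.
have := shortest_glue (walk0 r (fun=> a)) axj (walk_shift (j := j) xw) aP.
by rewrite subnK // => /(_ xmQ); lia.
Qed.

Lemma shortest_walk_Q_adj b i : b \in Q -> r (x i) b -> i <= m -> m <= i.+1.
Proof.
move=> bQ xib im.
by have := shortest_glue (walk_prefix xw im) xib (walk0 r (fun=> b)) x0P bQ; rewrite addn0.
Qed.

Lemma shortest_walk_inj i j : i < j <= m -> x i <> x j.
Proof.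
move=> /andP[ij jm] xij; have [jm' | jm'] := ltnP j m.
  have xi_next : r (x i) (x j.+1) by rewrite xij xw.
  have ij' : i < j.+1 <= m by apply/andP; lia.
  by have := shortest_walk_chordless ij' xi_next; lia.
have /negP[] := shortest_walk_notin_Q (leq_trans ij jm).
by rewrite xij (_ : j = m) //; lia.
Qed.

End ShortestWalk.

Definition mate (T : eqType) (a b p : T) := if p == a then b else a.

Lemma mate_in (T : finType) (a b p : T) : mate a b p \in [set a; b].
Proof. by rewrite /mate; case: eqP; rewrite !inE eqxx ?orbT. Qed.

Lemma set2_mate (T : finType) (a b p : T) :
  p \in [set a; b] -> [set p; mate a b p] = [set a; b].
Proof.
rewrite /mate => /set2P[]->; first by rewrite eqxx.
by case: (b =P a) => [->|_]; rewrite // setUC.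
Qed.

Lemma mate_neq (T : finType) (a b p : T) :
  a != b -> p \in [set a; b] -> p != mate a b p.
Proof.
rewrite /mate => ab /set2P[]->; first by rewrite eqxx.
by rewrite eq_sym in ab; rewrite (negbTE ab).
Qed.

Lemma set4U (T : finType) (a1 a2 b1 b2 : T) :
  [set a1; a2; b1; b2] = [set a1; a2] :|: [set b1; b2].
Proof. by rewrite setUA. Qed.

Lemma upairC n (p q a b : 'I_n) : upair p q a b = upair q p a b.
Proof. by rewrite /upair orbC andbC [(q == b) && _]andbC. Qed.

Lemma cross_disjoint n (a1 a2 b1 b2 : 'I_n) :
  cross a1 a2 b1 b2 -> [disjoint [set a1; a2] & [set b1; b2]].
Proof.
move=> c; rewrite disjoint_subset; apply/subsetP=> u /set2P[]->;
  by rewrite !inE -!val_eqE /=; case: c; lia.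
Qed.

Section Graph.
Variables (n : nat) (adj : rel 'I_n).
Implicit Types (S D : {set 'I_n}).

Lemma joinedP a1 a2 b1 b2 :
  reflect (exists a b, [/\ a \in [set a1; a2], b \in [set b1; b2] & adj a b])
          (joined adj a1 a2 b1 b2).
Proof.
apply: (iffP idP) => [|[a [b [/set2P[]-> /set2P[]-> ab]]]].
- by case/or4P=> ab; [exists a1, b1 | exists a1, b2 | exists a2, b1 | exists a2, b2];
    rewrite !inE !eqxx ?orbT.
all: by rewrite /joined ab ?orbT.
Qed.

Lemma unjoined_walk_gt1 S a1 a2 b1 b2 x m :
  [disjoint [set a1; a2] & [set b1; b2]] -> ~~ joined adj a1 a2 b1 b2 ->
  x 0 \in [set a1; a2] -> x m \in [set b1; b2] -> walk (induced adj S) x m -> 1 < m.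
Proof.
move=> AB nj x0A; case: m => [|[|m]] // xmB xw.
  by rewrite (disjointFr AB x0A) in xmB.
by case/negP: nj; apply/joinedP; exists (x 0), (x 1); case/and3P: (xw 0 isT).
Qed.

Lemma induced_closed S : closed (induced adj S) (mem S).
Proof. by move=> x y /and3P[-> -> _]. Qed.

Lemma connect_induced_mem S x y : x \in S -> connect (induced adj S) x y -> y \in S.
Proof. by move=> xS /(closed_connect (@induced_closed S)) <-. Qed.

Lemma connect_induced_adj S : subrel (connect (induced adj S)) (connect adj).
Proof. by apply: connect_sub => x y /and3P[_ _ /connect1]. Qed.

Lemma connected_onP S :
  reflect (forall x y, x \in S -> y \in S -> connect (induced adj S) x y)
          (connected_on adj S).
Proof.
apply: (iffP forall_inP) => [h x y xS | h x xS]; first exact: (forall_inP (h x xS)).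
by apply/forall_inP=> y; apply: h.
Qed.

Hypothesis adj_sym : symmetric adj.

Lemma induced_sym S : symmetric (induced adj S).
Proof. by move=> x y; rewrite /induced /= adj_sym andbCA. Qed.

Lemma connected_on_root S z :
  (forall u, u \in S -> connect (induced adj S) z u) -> connected_on adj S.
Proof.
move=> zS; apply/connected_onP=> x y xS yS; apply: connect_trans (zS y yS).
by rewrite (sym_connect_sym (@induced_sym S)) zS.
Qed.

Lemma connect_induced_component D p y :
  connect (induced adj D) p y ->
  connect (induced adj [set u | connect (induced adj D) p u]) p y.
Proof.
case/connectP=> s; elim/last_ind: s y => [|s z IHs] y; first by move=> _ ->.
rewrite rcons_path last_rcons => /andP[ps sz] ->.
have pl : connect (induced adj D) p (last p s) by apply/connectP; exists s.
apply: connect_trans (IHs _ ps erefl) (connect1 _).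
by rewrite /induced /= !inE pl (connect_trans pl (connect1 sz)); case/and3P: sz.
Qed.

Lemma connected_on_component D p :
  connected_on adj [set u | connect (induced adj D) p u].
Proof.
by apply: (@connected_on_root _ p) => u; rewrite inE; apply: connect_induced_component.
Qed.

Lemma adj_set2 a b p q :
  adj a b -> p \in [set a; b] -> q \in [set a; b] -> p != q -> adj p q.
Proof. by move=> ab /set2P[]-> /set2P[]->; rewrite ?eqxx // adj_sym. Qed.

Lemma connect_set2 S a b p q : adj a b -> [set a; b] \subset S ->
  p \in [set a; b] -> q \in [set a; b] -> connect (induced adj S) p q.
Proof.
move=> ab abS pab qab; have [<-|pq] := eqVneq p q; first exact: connect0.
by apply: connect1; rewrite /induced /= !(subsetP abS) // (adj_set2 ab).
Qed.

Lemma separates_cut_vertex z a1 a2 b1 b2 :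
  separates adj z a1 a2 b1 b2 -> connect adj a1 b1 -> cut_vertex adj z.
Proof.
case=> zE sep ab; exists a1, b1; split=> //; last by apply: sep; rewrite !inE eqxx.
  by apply: contraNneq zE => <-; rewrite !inE eqxx.
by apply: contraNneq zE => <-; rewrite !inE eqxx !orbT.
Qed.

End Graph.

Section CrossingClosed.
Variables (n : nat) (adj : rel 'I_n) (a1 a2 b1 b2 : 'I_n) (J : {set 'I_n}).
Hypotheses (adj_sym : symmetric adj) (a12 : adj a1 a2) (b12 : adj b1 b2).
Hypothesis HJ : is_J adj a1 a2 b1 b2 J.

Local Notation spans := (spans_conn adj a1 a2 b1 b2).
Local Notation A := [set a1; a2].
Local Notation B := [set b1; b2].

Lemma is_J_spans : spans J.
Proof. by have /minsetP[] : minset spans J by rewrite HJ. Qed.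

Lemma is_J_sub S : spans S -> J \subset S.
Proof. by case/minset_exists=> S'; rewrite HJ => /eqP->. Qed.

Lemma is_J_eq S : spans S -> S \subset J -> S = J.
Proof. by move=> sS SJ; apply/eqP; rewrite eqEsubset SJ is_J_sub. Qed.

Lemma ends_sub_J : A :|: B \subset J.
Proof. by rewrite -set4U; case/andP: is_J_spans. Qed.

Lemma J_connected : connected_on adj J.
Proof. by case/andP: is_J_spans. Qed.

Lemma J_joined : joined adj a1 a2 b1 b2 -> J = [set a1; a2; b1; b2].
Proof.
case/joinedP=> a [b [aA bB ab]]; apply/esym/is_J_eq; last by rewrite set4U ends_sub_J.
rewrite /spans_conn subxx; apply: (@connected_on_root _ _ adj_sym _ a).
rewrite set4U => u /setUP[uA | uB].
  exact: (connect_set2 adj_sym a12 (subsetUl A B) aA uA).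
apply: connect_trans (connect1 _) (connect_set2 adj_sym b12 (subsetUr A B) bB uB).
by rewrite /induced /= (subsetP (subsetUl A B) _ aA) (subsetP (subsetUr A B) _ bB).
Qed.

Lemma J_separates z :
  z \in J -> z \notin [set a1; a2; b1; b2] -> separates adj z a1 a2 b1 b2.
Proof.
move=> zJ zE; split=> // p q pA qB; apply/negP=> pq.
have notz : [set a1; a2; b1; b2] \subset [set~ z].
  by apply/subsetP=> u uE; rewrite !inE; apply: contraNneq zE => <-.
have [Az Bz] : A \subset [set~ z] /\ B \subset [set~ z].
  by apply/andP; rewrite -subUset -set4U.
have /subsetP/(_ z zJ) : J \subset [set u | connect (del_vertex adj z) p u].
  apply: is_J_sub; rewrite /spans_conn /del_vertex (connected_on_component adj_sym).
  rewrite andbT set4U subUset.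
  apply/andP; split; apply/subsetP=> u uE; rewrite inE.
    exact: (connect_set2 adj_sym a12 Az pA uE).
  exact: connect_trans pq (connect_set2 adj_sym b12 Bz qB uE).
by rewrite inE => /(connect_induced_mem (subsetP Az _ pA)); rewrite !inE eqxx.
Qed.

Lemma J_cut_vertex z : z \in J -> z \notin [set a1; a2; b1; b2] ->
  cut_vertex adj z /\ separates adj z a1 a2 b1 b2.
Proof.
move=> zJ zE; have zsep := J_separates zJ zE; split=> //.
apply: separates_cut_vertex zsep (connect_induced_adj (S := J) _).
by apply/connected_onP; rewrite ?J_connected ?(subsetP ends_sub_J) // !inE eqxx ?orbT.
Qed.

Lemma J_shortest_walk : exists x m, shortest_walk (induced adj J) A B x m.
Proof.
apply: shortest_walk_exists.
have /connected_onP J_conn := J_connected.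
have /connect_walk[x [m [<- <- xw]]] : connect (induced adj J) a1 b1.
  by apply: J_conn; apply: (subsetP ends_sub_J); rewrite !inE eqxx ?orbT.
by exists x, m; rewrite !inE !eqxx.
Qed.

End CrossingClosed.

Section ShortestPathInJ.
Variables (n : nat) (adj : rel 'I_n) (a1 a2 b1 b2 : 'I_n) (J : {set 'I_n}).
Hypothesis HJ : is_J adj a1 a2 b1 b2 J.

Local Notation A := [set a1; a2].
Local Notation B := [set b1; b2].

Variables (x : nat -> 'I_n) (k : nat).
Local Notation m := k.+2.
Hypothesis xs : shortest_walk (induced adj J) A B x m.
Let x0A : x 0 \in A. Proof. by case: xs. Qed.
Let xmB : x m \in B. Proof. by case: xs. Qed.
Let xw : walk (induced adj J) x m. Proof. by case: xs. Qed.

Let ends_in_J u : u \in A :|: B -> u \in J. Proof. exact: subsetP (ends_sub_J HJ) u. Qed.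

Lemma walk_in_J i : i <= m -> x i \in J.
Proof.
move=> im; apply: connect_induced_mem (walk_connect xw im).
by rewrite ends_in_J // in_setU x0A.
Qed.

Lemma walk_adj i : i < m -> adj (x i) (x i.+1).
Proof. by move/xw/and3P=> []. Qed.

Lemma walk_inner_notin i : i <= k -> x i.+1 \notin [set a1; a2; b1; b2].
Proof.
move=> ik; rewrite set4U in_setU negb_or.
by rewrite (shortest_walk_notin_P xs) ?(shortest_walk_notin_Q xs) //; lia.
Qed.

Lemma walk_inner_inj : {in iota 0 k.+1 &, injective (fun i => x i.+1)}.
Proof.
move=> i j; rewrite !mem_iota /= => ik jk xij.
case: (ltngtP i j) => // ij.
  by case: (shortest_walk_inj xs (i := i.+1) (j := j.+1) _ xij); lia.
by case: (shortest_walk_inj xs (i := j.+1) (j := i.+1) _ (esym xij)); lia.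
Qed.

Lemma walk_chordless s t : s < t <= m -> adj (x s) (x t) -> t = s.+1.
Proof.
move=> st xst; apply: (shortest_walk_chordless xs st).
by rewrite /induced /= xst !walk_in_J //; lia.
Qed.

Hypotheses (adj_sym : symmetric adj) (a12 : adj a1 a2) (b12 : adj b1 b2).

Lemma walk_inner_cut i : i <= k ->
  cut_vertex adj (x i.+1) /\ separates adj (x i.+1) a1 a2 b1 b2.
Proof.
move=> ik; have xJ : x i.+1 \in J by apply: walk_in_J; lia.
exact: (J_cut_vertex adj_sym a12 b12 HJ xJ (walk_inner_notin ik)).
Qed.

Hypothesis adj_irr : irreflexive adj.

Local Notation v' := (mate a1 a2 (x 0)).
Local Notation w' := (mate b1 b2 (x m)).

Let v'A : v' \in A. Proof. exact: mate_in. Qed.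
Let w'B : w' \in B. Proof. exact: mate_in. Qed.
Let Av' : [set x 0; v'] = A. Proof. exact: set2_mate. Qed.
Let Bw' : [set x m; w'] = B. Proof. exact: set2_mate. Qed.

Let adj_neq u w : adj u w -> u != w.
Proof. by apply: contraTneq => ->; rewrite adj_irr. Qed.

Let xv' : x 0 != v'. Proof. exact: mate_neq (adj_neq a12) x0A. Qed.
Let xmw' : x m != w'. Proof. exact: mate_neq (adj_neq b12) xmB. Qed.

Lemma J_eq : J = [set x 0; v'; x m; w'] :|: [set x (val i).+1 | i : 'I_k.+1].
Proof.
set S := _ :|: _.
have ABS : A :|: B \subset S by rewrite -Av' -Bw' -set4U subsetUl.
have xS i : i <= m -> x i \in S.
  case: i => [|i] im; first by rewrite !inE eqxx.
  have [ik | ->] : i < k.+1 \/ i = k.+1 by lia.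
    by apply/setUP; right; apply/imsetP; exists (Ordinal ik).
  by rewrite !inE eqxx ?orbT.
have xwS : walk (induced adj S) x m.
  by move=> i im; rewrite /induced /= !xS ?walk_adj // ltnW.
apply/esym/(is_J_eq HJ).
  rewrite /spans_conn set4U ABS; apply: (@connected_on_root _ _ adj_sym _ (x 0)) => u.
  case/setUP=> [|/imsetP[i _ ->]]; last exact: (walk_connect xwS (leqW (ltn_ord i))).
  rewrite set4U Av' Bw' => /setUP[uA | uB].
    exact: (connect_set2 adj_sym a12 (subset_trans (subsetUl A B) ABS) x0A uA).
  apply: connect_trans (walk_connect xwS (leqnn m)) _.
  exact: (connect_set2 adj_sym b12 (subset_trans (subsetUr A B) ABS) xmB uB).
apply/subsetP=> u /setUP[|/imsetP[i _ ->]]; last exact: walk_in_J (leqW (ltn_ord i)).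
by rewrite set4U Av' Bw'; apply: (subsetP (ends_sub_J HJ)).
Qed.

Lemma J_vertex p : p \in J -> [\/ p = v', p = w' | exists2 t, t <= m & p = x t].
Proof.
rewrite J_eq => /setUP[|/imsetP[i _ ->]].
  by rewrite !inE -!orbA => /or4P[]/eqP->; [apply: Or33; exists 0 | apply: Or31
    | apply: Or33; exists m | apply: Or32].
by apply: Or33; exists i.+1; rewrite ?(leqW (ltn_ord i)).
Qed.

Lemma walk_edges :
  [/\ adj (x 0) v', adj (x m) w', (forall i, i < k -> adj (x i.+1) (x i.+2)),
      adj (x 0) (x 1) || adj v' (x 1) & adj (x m) (x k.+1) || adj w' (x k.+1)].
Proof.
split; [exact: (adj_set2 adj_sym a12 x0A v'A xv') | exact: (adj_set2 adj_sym b12 xmB w'B xmw')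
  | move=> i ik; apply: walk_adj; lia | by rewrite walk_adj | by rewrite adj_sym walk_adj].
Qed.

Hypothesis not_joined : ~~ joined adj a1 a2 b1 b2.

Lemma v'_adj q : q \in J -> adj v' q -> q = x 0 \/ q = x 1.
Proof.
case/J_vertex=> [->|->|[t tm ->]] v'q; first by rewrite adj_irr in v'q.
  by case/negP: not_joined; apply/joinedP; exists v', w'.
have v'J : v' \in J by rewrite ends_in_J // in_setU v'A.
have v'x : induced adj J v' (x t) by rewrite /induced /= v'J walk_in_J.
have t1 := shortest_walk_P_adj xs v'A v'x tm.
by case: t t1 {tm v'q v'x} => [|[|]] // _; [left | right].
Qed.

Lemma w'_adj q : q \in J -> adj q w' -> q = x m \/ q = x k.+1.
Proof.
case/J_vertex=> [->|->|[t tm ->]] qw'; last 1 first.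
- have w'J : w' \in J by rewrite ends_in_J // in_setU w'B orbT.
  have xtw' : induced adj J (x t) w' by rewrite /induced /= w'J walk_in_J.
  have mt := shortest_walk_Q_adj xs w'B xtw' tm.
  have [->|->] : t = m \/ t = k.+1 by lia.
    by left.
  by right.
- by case/negP: not_joined; apply/joinedP; exists v', w'.
- by rewrite adj_irr in qw'.
Qed.

Lemma J_edge p q : p \in J -> q \in J -> adj p q ->
  [|| upair p q (x 0) v', upair p q (x m) w',
      [exists i : 'I_k, upair p q (x i.+1) (x i.+2)],
      upair p q (x 0) (x 1), upair p q v' (x 1),
      upair p q (x m) (x k.+1) | upair p q w' (x k.+1)].
Proof.
pose E u w := [|| upair u w (x 0) v', upair u w (x m) w',
  [exists i : 'I_k, upair u w (x i.+1) (x i.+2)],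
  upair u w (x 0) (x 1), upair u w v' (x 1),
  upair u w (x m) (x k.+1) | upair u w w' (x k.+1)].
have E_sym u w : E u w = E w u.
  rewrite /E !(upairC u w); congr [|| _, _, _, _, _, _ | _].
  by apply: eq_existsb => i; apply: upairC.
have path_edge s : s < m -> E (x s) (x s.+1).
  case: s => [|s] sm; first by rewrite /E /upair !eqxx /= ?orbT.
  have [sk | ->] : s < k \/ s = k by lia.
    rewrite /E; apply/or3P/Or33/orP; left; apply/existsP; exists (Ordinal sk).
    by rewrite /upair !eqxx.
  by rewrite /E /upair !eqxx /= ?orbT.
move=> pJ qJ pq; change (E p q).
case/J_vertex: pJ pq => [->|->|[s sm ->]] pq.
- by case: (v'_adj qJ pq) => ->; rewrite /E /upair !eqxx /= ?orbT.
- rewrite adj_sym in pq.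
  by case: (w'_adj qJ pq) => ->; rewrite /E /upair !eqxx /= ?orbT.
case/J_vertex: qJ pq => [->|->|[t tm ->]] pq.
- rewrite adj_sym in pq.
  by case: (v'_adj (walk_in_J sm) pq) => ->; rewrite /E /upair !eqxx /= ?orbT.
- by case: (w'_adj (walk_in_J sm) pq) => ->; rewrite /E /upair !eqxx /= ?orbT.
case: (ltngtP s t) => [st|ts|st]; last by rewrite st adj_irr in pq.
  by rewrite (walk_chordless _ pq) ?st // path_edge //; lia.
rewrite adj_sym in pq.
by rewrite E_sym (walk_chordless _ pq) ?ts // path_edge //; lia.
Qed.

End ShortestPathInJ.

Theorem lemma2p4 (n : nat) (adj : rel 'I_n)
  (adj_sym : symmetric adj) (adj_irr : irreflexive adj)
  (a1 a2 b1 b2 : 'I_n)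
  (He : is_edge adj a1 a2) (Hf : is_edge adj b1 b2)
  (Hcross : cross a1 a2 b1 b2)
  (Hcc : crossing_closed adj a1 a2 b1 b2)
  (J : {set 'I_n}) (HJ : is_J adj a1 a2 b1 b2 J) :
  (* (1) *)
  (joined adj a1 a2 b1 b2 -> J = [set a1; a2; b1; b2]) /\
  (* (2) *)
  (~~ joined adj a1 a2 b1 b2 ->
   exists (v v' w w' : 'I_n) (k : nat) (x : nat -> 'I_n),
     [/\ [set v; v'] = [set a1; a2] /\ [set w; w'] = [set b1; b2],
         ({in iota 0 k.+1 &, injective x}),
         (forall i, i <= k -> x i \notin [set a1; a2; b1; b2]),
         J = [set v; v'; w; w'] :|: [set x (val i) | i : 'I_k.+1] &
       [/\ (* edges present *)
         [/\ adj v v', adj w w',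
             (forall i, i < k -> adj (x i) (x i.+1)),
             adj v (x 0) || adj v' (x 0) &
             adj w (x k) || adj w' (x k)],
         (* no other edges in J(e,f) *)
         (forall p q, p \in J -> q \in J -> adj p q ->
            [|| upair p q v v', upair p q w w',
                [exists i : 'I_k, upair p q (x i) (x i.+1)],
                upair p q v (x 0), upair p q v' (x 0),
                upair p q w (x k) | upair p q w' (x k)]) &
         (* every x_i is a cut vertex of G separating e and f *)
         (forall i, i <= k ->
            cut_vertex adj (x i) /\ separates adj (x i) a1 a2 b1 b2)]]).
Proof.
case/andP: He => _ a12; case/andP: Hf => _ b12.
split; first exact: J_joined.
move=> not_joined.
have [x [m xs]] := J_shortest_walk HJ.
have [x0A xmB xw _] := xs.
have [k def_m] : exists k, m = k.+2.
  have := unjoined_walk_gt1 (cross_disjoint Hcross) not_joined x0A xmB xw.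
  by move=> m_gt1; exists m.-2; lia.
subst m.
exists (x 0), (mate a1 a2 (x 0)), (x k.+2), (mate b1 b2 (x k.+2)), k, (fun i => x i.+1).
split; first by split; apply: set2_mate.
- exact: (walk_inner_inj xs).
- exact: (walk_inner_notin xs).
- exact: (J_eq HJ xs adj_sym a12 b12 adj_irr).
split; first exact: (walk_edges xs adj_sym a12 b12 adj_irr).
  exact: (J_edge HJ xs adj_sym a12 b12 adj_irr not_joined).
exact: (walk_inner_cut HJ xs adj_sym a12 b12).
Qed.
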